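(* Let $\Gamma=(V,E,m)$ be an even-labeled graph with $m_e=2\ell_e$, let $u\in V$ and let $k\ge 2$ be an integer. Let $\mathbb{A}_{\Gamma,u,k}$ be the kernel of the homomorphism $\alpha_{u,k}:\mathbb{A}_\Gamma\to\mathbb{Z}_k$ with $u\mapsto 1$ and $v\mapsto 0$ for $v\ne u$. Put $V_{2,u}=\{v\in V: \{u,v\}\in E,\ m_{\{u,v\}}=2\}$ and $W=V\setminus(\{u\}\cup V_{2,u})$. Then $\mathbb{A}_{\Gamma,u,k}$ is generated by the elements $$\bar u=u^k,\qquad v\ (v\in V_{2,u}),\qquad w_i=u^iwu^{-i}\ (w\in W,\ i=0,\dots,k-1),$$ and, regarding these as abstract letters, a complete set of defining relations is: (R1) $v\bar u=\bar u v$ for $v\in V_{2,u}$; (R2) $(vv')^{\ell_e}=(v'v)^{\ell_e}$ for $v,v'\in V_{2,u}$ with $e=\{v,v'\}\in E$; (R3) $(vw_i)^{\ell_e}=(w_iv)^{\ell_e}$ for $v\in V_{2,u}$, $w\in W$, $e=\{v,w\}\in E$, $i=0,\dots,k-1$; (R4) $(w_iw'_i)^{\ell_e}=(w'_iw_i)^{\ell_e}$ for $w,w'\in W$, $e=\{w,w'\}\in E$, $i=0,\dots,k-1$; (RB) for each $w\in W$ adjacent to $u$, with $e=\{u,w\}$, and each $i=0,\dots,k-1$: $$W_iW_{i+1}\cdots W_{i+\ell_e-1}=W_{i+1}W_{i+2}\cdots W_{i+\ell_e},$$ where for an integer $j\ge 0$ written $j=qk+s$ with $0\le s<k$ we set $W_j:=\bar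 u^{\,q}w_s\bar u^{-q}$.
   Context: Labeled graph $\Gamma=(V,E,m)$: finite simple graph with labels $m_e\in\mathbb{Z}_{\ge2}$; even if all labels are even. Artin group $\mathbb{A}_\Gamma=\langle v\in V\mid \langle uv\rangle^{m_e}=\langle vu\rangle^{m_e},\ \{u,v\}\in E\rangle$, where $\langle uv\rangle^m$ is the alternating word of length $m$ starting with $u$ (for $m=2\ell$ this is $(uv)^\ell=(vu)^\ell$); non-adjacent vertices impose no relation. Since all labels are even, $\alpha_{u,k}$ is a well-defined surjection; its kernel $\mathbb{A}_{\Gamma,u,k}$ is called a co-cyclic subgroup. The presentation above is called the standard presentation of $\mathbb{A}_{\Gamma,u,k}$. *)

(* Groups given by presentations are modelled concretely:
   elements are words over letters-with-signs, and equality in the presented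
   group is the group congruence generated by free cancellation and relators. *)
From HB Require Import structures.
From mathcomp Require Import all_boot all_order all_algebra.
Set Implicit Arguments. Unset Strict Implicit. Unset Printing Implicit Defensive.
Import GRing.Theory.

(* a signed letter: (x, false) = x, (x, true) = x^-1 *)
Definition word (T : Type) := seq (T * bool).

Definition linv (T : Type) (p : T * bool) : T * bool := (p.1, ~~ p.2).
Definition winv (T : Type) (w : word T) : word T := rev (map (@linv T) w).

Inductive gcong (T : Type) (R : word T -> word T -> Prop) : word T -> word T -> Prop :=
| geq_refl x : gcong R x x
| geq_sym x y : gcong R x y -> gcong R y x
| geq_trans x y z : gcong R x y -> gcong R y z -> gcong R x z
| geq_free (a b : word T) (p : T * bool) :
    gcong R (a ++ [:: p; linv p] ++ b) (a ++ b)
| geq_rel (a b r s : word T) : R r s -> gcong R (a ++ r ++ b) (a ++ s ++ b).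

Definition alt (T : Type) (a b : T) (n : nat) : word T :=
  mkseq (fun i => (if odd i then b else a, false)) n.

Definition wpow (T : Type) (w : seq T) (n : nat) : word T :=
  map (fun x => (x, false)) (flatten (nseq n w)).

Definition artin_rel (V : Type) (E : V -> V -> bool) (m : V -> V -> nat)
  (r s : word V) : Prop :=
  exists a b, E a b /\ r = alt a b (m a b) /\ s = alt b a (m a b).

Definition alpha (V : eqType) (u : V) (k : nat) (g : word V) : 'Z_k :=
  (\sum_(p <- g) (if p.1 == u then (if p.2 then -1 else 1) else 0 : 'Z_k))%R.

Definition V2u (V : eqType) (E : V -> V -> bool) (m : V -> V -> nat) (u v : V) : bool :=
  E u v && (m u v == 2).
Definition Wset (V : eqType) (E : V -> V -> bool) (m : V -> V -> nat) (u w : V) : bool :=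
  (w != u) && ~~ V2u E m u w.

(* abstract letters: ubar, v (v in V2u), w_i (w in W, i < k) *)
Inductive plet (V : Type) := Ubar | Vl of V | Wl of V & nat.
Arguments Ubar {V}.

Definition wf_letter (V : eqType) (E : V -> V -> bool) (m : V -> V -> nat)
  (u : V) (k : nat) (x : plet V) : bool :=
  match x with
  | Ubar => true
  | Vl v => V2u E m u v
  | Wl w i => Wset E m u w && (i < k)
  end.

Definition wf_word (V : eqType) (E : V -> V -> bool) (m : V -> V -> nat)
  (u : V) (k : nat) (x : word (plet V)) : bool :=
  all (fun p => wf_letter E m u k p.1) x.

Definition phiL (V : Type) (u : V) (k : nat) (x : plet V) : word V :=
  match x with
  | Ubar => nseq k (u, false)
  | Vl v => [:: (v, false)]
  | Wl w i => nseq i (u, false) ++ [:: (w, false)] ++ nseq i (u, true)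
  end.

Definition phi (V : Type) (u : V) (k : nat) (x : word (plet V)) : word V :=
  flatten (map (fun p => if p.2 then winv (phiL u k p.1) else phiL u k p.1) x).

Definition Wj (V : Type) (k : nat) (w : V) (j : nat) : word (plet V) :=
  nseq (j %/ k) (Ubar, false) ++ [:: (Wl w (j %% k), false)]
    ++ nseq (j %/ k) (Ubar, true).

(* the relations (R1),(R2),(R3),(R4),(RB); l_e = m_e / 2 *)
Definition pres_rel (V : eqType) (E : V -> V -> bool) (m : V -> V -> nat)
  (u : V) (k : nat) (r s : word (plet V)) : Prop :=
  (exists v, V2u E m u v /\
     r = [:: (Vl v, false); (Ubar, false)] /\ s = [:: (Ubar, false); (Vl v, false)])
  \/
  (exists v v', [/\ V2u E m u v, V2u E m u v', E v v',
     r = wpow [:: Vl v; Vl v'] (m v v')./2 & s = wpow [:: Vl v'; Vl v] (m v v')./2])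
  \/
  (exists v w i, [/\ V2u E m u v, Wset E m u w, E v w, i < k &
     r = wpow [:: Vl v; Wl w i] (m v w)./2 /\ s = wpow [:: Wl w i; Vl v] (m v w)./2])
  \/
  (exists w w' i, [/\ Wset E m u w, Wset E m u w', E w w', i < k &
     r = wpow [:: Wl w i; Wl w' i] (m w w')./2 /\ s = wpow [:: Wl w' i; Wl w i] (m w w')./2])
  \/
  (exists w i, [/\ Wset E m u w, E u w, i < k,
     r = flatten [seq Wj k w j | j <- iota i (m u w)./2]
   & s = flatten [seq Wj k w j | j <- iota i.+1 (m u w)./2]]).

From HB Require Import structures.
From mathcomp Require Import all_boot all_order all_algebra.
Set Implicit Arguments. Unset Strict Implicit. Unset Printing Implicit Defensive.
Import GRing.Theory.

(* Reidemeister-Schreier rewriting for the transversal 1, u, ..., u^(k-1).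
   A word of A_Gamma is read letter by letter while the current coset u^c
   (c < k) is recorded: u^(+-1) only moves c, emitting ubar^(+-1) when c wraps
   around modulo k, and any other letter x is rewritten as v or as w_c.  The
   final coset of g is alpha(g), and g equals phi of its rewriting times u^c,
   so the kernel is generated.  The rewriting is a left inverse of phi, turns
   free cancellations into free cancellations, and turns every Artin relator
   into a consequence of (R1)-(RB): relators avoiding u become (R2)-(R4) in
   the current coset, uv = vu with m = 2 becomes (R1) or a triviality, and
   (uw)^l = (wu)^l becomes (RB).  Conversely phi maps (R1)-(RB) to
   consequences of the Artin relations, since w_i is conjugation of w by u^i
   and u commutes with V_{2,u}. *)

Section Words.
Variable T : Type.

Lemma linvK : involutive (@linv T).
Proof. by case=> x []. Qed.

Lemma winv_cons (p : T * bool) (x : word T) : winv (p :: x) = winv x ++ [:: linv p].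
Proof. by rewrite /winv /= rev_cons cats1. Qed.

Lemma winv_cat (x y : word T) : winv (x ++ y) = winv y ++ winv x.
Proof. by rewrite /winv map_cat rev_cat. Qed.

Lemma winvK : involutive (@winv T).
Proof. by move=> x; rewrite /winv map_rev revK -map_comp (eq_map linvK) map_id. Qed.

Lemma winv_nseq n (p : T * bool) : winv (nseq n p) = nseq n (linv p).
Proof. by rewrite /winv map_nseq rev_nseq. Qed.

Definition wconj (a s : word T) : word T := a ++ s ++ winv a.

Lemma winv_wconj a s : winv (wconj a s) = wconj a (winv s).
Proof. by rewrite /wconj !winv_cat winvK catA. Qed.

Lemma wpow2S (a b : T) n :
  wpow [:: a; b] n.+1 = [:: (a, false), (b, false) & wpow [:: a; b] n].
Proof. by []. Qed.

Lemma alt_double (a b : T) n : alt a b n.*2 = wpow [:: a; b] n.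
Proof.
elim: n => [|n IH] //; rewrite doubleS wpow2S -IH /alt /mkseq /=; congr [:: _, _ & _].
rewrite -[2]/(2 + 0) iotaDl -map_comp; apply: eq_map => j /=.
by rewrite add0n negbK.
Qed.

Lemma alt_even (a b : T) n : ~~ odd n -> alt a b n = wpow [:: a; b] n./2.
Proof. by move=> n_even; rewrite -alt_double even_halfK. Qed.

Lemma wpow_rcons (a b : T) n :
  (a, false) :: wpow [:: b; a] n = wpow [:: a; b] n ++ [:: (a, false)].
Proof. by elim: n => [|n IH] //; rewrite !wpow2S /= -IH. Qed.

End Words.

Section WordCongruence.
Variables (T : Type) (R : word T -> word T -> Prop).

Lemma gcong_ctx a b x y : gcong R x y -> gcong R (a ++ x ++ b) (a ++ y ++ b).
Proof.
elim=> {x y} [x|x y _ IH|x y z _ IH1 _ IH2|a' b' p|a' b' r s Hrs].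
- exact: geq_refl.
- exact: geq_sym.
- exact: geq_trans IH2.
- by have := geq_free R (a ++ a') (b' ++ b) p; rewrite -!catA.
- by have := geq_rel (a ++ a') (b' ++ b) Hrs; rewrite -!catA.
Qed.

Lemma gcong_catl a x y : gcong R x y -> gcong R (a ++ x) (a ++ y).
Proof. by move/(gcong_ctx a [::]); rewrite !cats0. Qed.

Lemma gcong_catr b x y : gcong R x y -> gcong R (x ++ b) (y ++ b).
Proof. exact: gcong_ctx [::] b x y. Qed.

Lemma gcong_cat a a' b b' :
  gcong R a a' -> gcong R b b' -> gcong R (a ++ b) (a' ++ b').
Proof. by move=> /(gcong_catr b) Ha /(gcong_catl a') Hb; exact: geq_trans Ha Hb. Qed.

Lemma gcong_rel r s : R r s -> gcong R r s.
Proof. by move/(geq_rel [::] [::]); rewrite !cats0. Qed.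

Lemma gcong_free p : gcong R [:: p; linv p] [::].
Proof. by have := geq_free R [::] [::] p; rewrite cats0. Qed.

Lemma gcong_mulV x : gcong R (x ++ winv x) [::].
Proof.
elim: x => [|p x IH]; first exact: geq_refl.
rewrite winv_cons catA.
exact: geq_trans (gcong_ctx [:: p] [:: linv p] IH) (gcong_free p).
Qed.

Lemma gcong_Vmul x : gcong R (winv x ++ x) [::].
Proof. by have := gcong_mulV (winv x); rewrite winvK. Qed.

Lemma gcong_cancel a x b : gcong R (a ++ x ++ winv x ++ b) (a ++ b).
Proof. by have := gcong_ctx a b (gcong_mulV x); rewrite -catA. Qed.

Lemma gcong_wconj a x y : gcong R x y -> gcong R (wconj a x) (wconj a y).
Proof. exact: gcong_ctx. Qed.

Lemma wconj_nil a : gcong R (wconj a [::]) [::].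
Proof. exact: gcong_mulV. Qed.

Lemma wconj_catr a s : gcong R (wconj a s ++ a) (a ++ s).
Proof.
by rewrite /wconj -!catA; have := gcong_cancel (a ++ s) (winv a) [::]; rewrite winvK !cats0 -catA.
Qed.

Lemma wconj_cat a x y : gcong R (wconj a x ++ wconj a y) (wconj a (x ++ y)).
Proof. by rewrite /wconj -!catA; have := gcong_cancel (a ++ x) (winv a) (y ++ winv a); rewrite winvK -!catA. Qed.

Section Commuting.
Variables p q : T * bool.
Hypothesis pq : gcong R [:: p; q] [:: q; p].

Lemma gcong_comm_linv : gcong R [:: p; linv q] [:: linv q; p].
Proof.
apply: (@geq_trans _ _ _ ([:: linv q] ++ [:: q; p] ++ [:: linv q])).
  by apply: geq_sym; have := gcong_ctx [::] [:: p; linv q] (gcong_free (linv q)); rewrite linvK.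
apply: (@geq_trans _ _ _ ([:: linv q] ++ [:: p; q] ++ [:: linv q])).
  by apply: gcong_ctx; apply: geq_sym.
by have := gcong_ctx [:: linv q; p] [::] (gcong_free q); rewrite cats0.
Qed.

Lemma gcong_comm_nseq n : gcong R (nseq n p ++ [:: q]) (q :: nseq n p).
Proof.
elim: n => [|n IH]; first exact: geq_refl.
apply: geq_trans (gcong_catl [:: p] IH) _.
exact: (gcong_ctx [::] (nseq n p) pq).
Qed.

Lemma wconj_comm n : gcong R (wconj (nseq n p) [:: q]) [:: q].
Proof.
apply: (@geq_trans _ _ _ ((q :: nseq n p) ++ winv (nseq n p))).
  by rewrite /wconj catA; apply: gcong_catr; exact: gcong_comm_nseq.
by have := gcong_cancel [:: q] (nseq n p) [::]; rewrite !cats0.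
Qed.

End Commuting.
End WordCongruence.

Section Substitution.
Variables (T T' : Type) (f : T -> word T').

Definition wsubst (x : word T) : word T' :=
  flatten [seq if p.2 then winv (f p.1) else f p.1 | p <- x].

Lemma wsubst_cat x y : wsubst (x ++ y) = wsubst x ++ wsubst y.
Proof. by rewrite /wsubst map_cat flatten_cat. Qed.

Lemma wsubst_letter p : wsubst [:: p] = if p.2 then winv (f p.1) else f p.1.
Proof. by rewrite /wsubst /= cats0. Qed.

Variable R' : word T' -> word T' -> Prop.

Lemma wsubst_free p : gcong R' (wsubst [:: p; linv p]) [::].
Proof.
rewrite (wsubst_cat [:: p]) !wsubst_letter; case: p => x [] /=.
  exact: gcong_Vmul.
exact: gcong_mulV.
Qed.

Lemma gcong_wsubst (R : word T -> word T -> Prop) :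
  (forall r s, R r s -> gcong R' (wsubst r) (wsubst s)) ->
  forall x y, gcong R x y -> gcong R' (wsubst x) (wsubst y).
Proof.
move=> fR x y; elim=> {x y} [x|x y _ IH|x y z _ IH1 _ IH2|a b p|a b r s Hrs].
- exact: geq_refl.
- exact: geq_sym.
- exact: geq_trans IH2.
- by rewrite !wsubst_cat; have := gcong_ctx (wsubst a) (wsubst b) (wsubst_free p).
- by rewrite !wsubst_cat; apply: gcong_ctx; exact: fR.
Qed.

Lemma wsubst_wpow_conj x1 x2 y1 y2 a n :
  gcong R' (f x1) (wconj a [:: (y1, false)]) ->
  gcong R' (f x2) (wconj a [:: (y2, false)]) ->
  gcong R' (wsubst (wpow [:: x1; x2] n)) (wconj a (wpow [:: y1; y2] n)).
Proof.
move=> H1 H2; elim: n => [|n IH]; first exact/geq_sym/wconj_nil.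
rewrite !wpow2S [wsubst _]/=.
apply: geq_trans (gcong_cat H1 (gcong_cat H2 IH)) _.
exact: geq_trans (gcong_catl _ (wconj_cat R' a _ _)) (wconj_cat R' a _ _).
Qed.

End Substitution.

Section Transducer.
Variables (S T T' : Type) (step : S -> T * bool -> word T' * S).

Fixpoint run_out (s : S) (g : word T) : word T' :=
  if g is p :: g' then (step s p).1 ++ run_out (step s p).2 g' else [::].

Fixpoint run_state (s : S) (g : word T) : S :=
  if g is p :: g' then run_state (step s p).2 g' else s.

Lemma run_out_cat s x y : run_out s (x ++ y) = run_out s x ++ run_out (run_state s x) y.
Proof. by elim: x s => [|p x IH] s //=; rewrite IH catA. Qed.

Lemma run_state_cat s x y : run_state s (x ++ y) = run_state (run_state s x) y.
Proof. by elim: x s => [|p x IH] s //=. Qed.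

Variable P : S -> Prop.
Hypothesis step_P : forall s p, P s -> P (step s p).2.

Lemma run_state_P s g : P s -> P (run_state s g).
Proof. by elim: g s => [|p g IH] s Ps //=; apply/IH/step_P. Qed.

Lemma gcong_run (R : word T -> word T -> Prop) (R' : word T' -> word T' -> Prop) :
  (forall s p, P s ->
     run_state s [:: p; linv p] = s /\ gcong R' (run_out s [:: p; linv p]) [::]) ->
  (forall s r r', P s -> R r r' ->
     run_state s r = run_state s r' /\ gcong R' (run_out s r) (run_out s r')) ->
  forall g h, gcong R g h -> forall s, P s ->
    run_state s g = run_state s h /\ gcong R' (run_out s g) (run_out s h).
Proof.
move=> run_free run_rel g h; elim=> {g h} [g|g h _ IH|g h i _ IH1 _ IH2|a b p|a b r r' Hr] s Ps.
- by split=> //; apply: geq_refl.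
- by have [-> ?] := IH s Ps; split=> //; apply: geq_sym.
- have [-> gh] := IH1 s Ps; have [-> hi] := IH2 s Ps.
  by split=> //; apply: geq_trans gh hi.
- have [fin_p out_p] := run_free _ p (run_state_P a Ps).
  rewrite !run_out_cat !run_state_cat fin_p; split=> //.
  by have := gcong_ctx (run_out s a) (run_out (run_state s a) b) out_p.
- have [fin_r out_r] := run_rel _ _ _ (run_state_P a Ps) Hr.
  rewrite !run_out_cat !run_state_cat fin_r; split=> //.
  by rewrite -fin_r; apply: gcong_ctx.
Qed.

Lemma gcong_run_rep (R : word T -> word T -> Prop) (f : T' -> word T) (rep : S -> word T) :
  (forall s p, P s ->
     gcong R (rep s ++ [:: p]) (wsubst f (step s p).1 ++ rep (step s p).2)) ->
  forall s g, P s -> gcong R (rep s ++ g) (wsubst f (run_out s g) ++ rep (run_state s g)).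
Proof.
move=> rep_step s g; elim: g s => [|p g IH] s Ps /=; first by rewrite cats0; apply: geq_refl.
rewrite -[p :: g]cat1s catA wsubst_cat.
apply: geq_trans (gcong_catr g (rep_step s p Ps)) _.
by rewrite -!catA; apply: gcong_catl; apply: IH; apply: step_P.
Qed.

End Transducer.

Section CoCyclicSubgroup.
Variables (V : finType) (E : rel V) (m : V -> V -> nat) (u : V) (k : nat).
Hypotheses (HEsym : symmetric E) (HEirr : irreflexive E)
  (Hmsym : forall a b, m a b = m b a)
  (Hmeven : forall a b, E a b -> 2 <= m a b /\ ~~ odd (m a b))
  (hk : 2 <= k).

Local Notation AG := (gcong (artin_rel E m)).
Local Notation PG := (gcong (pres_rel E m u k)).
Local Notation U := (u, false).

Lemma phi_cat x y : phi u k (x ++ y) = phi u k x ++ phi u k y.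
Proof. exact: wsubst_cat. Qed.

Lemma phi_cons p x :
  phi u k (p :: x) = (if p.2 then winv (phiL u k p.1) else phiL u k p.1) ++ phi u k x.
Proof. by []. Qed.

Lemma k_gt0 : 0 < k.
Proof. exact: ltnW. Qed.

Lemma edge_neq a b : E a b -> a != b.
Proof. by apply: contraTneq => ->; rewrite HEirr. Qed.

Lemma V2u_neq v : V2u E m u v -> v != u.
Proof. by case/andP=> /edge_neq; rewrite eq_sym. Qed.

Lemma artin_relP r s : artin_rel E m r s <->
  exists a b, [/\ E a b, r = wpow [:: a; b] (m a b)./2 & s = wpow [:: b; a] (m a b)./2].
Proof.
split=> -[a [b]]; [case=> Eab [-> ->] | case=> Eab -> ->]; exists a, b;
  have [_ m_even] := Hmeven Eab; by rewrite !alt_even.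
Qed.

Lemma artin_wpow a b : E a b -> AG (wpow [:: a; b] (m a b)./2) (wpow [:: b; a] (m a b)./2).
Proof. by move=> Eab; apply/gcong_rel/artin_relP; exists a, b. Qed.

Lemma V2u_comm v b : V2u E m u v -> AG [:: U; (v, b)] [:: (v, b); U].
Proof.
case/andP=> Euv /eqP muv.
have comm : AG [:: U; (v, false)] [:: (v, false); U] by move: (artin_wpow Euv); rewrite muv.
by case: b; first exact: (gcong_comm_linv comm).
Qed.

Lemma phiL_Wl w i : phiL u k (Wl w i) = wconj (nseq i U) [:: (w, false)].
Proof. by rewrite /wconj winv_nseq. Qed.

Lemma phi_Wl w i b : phi u k [:: (Wl w i, b)] = wconj (nseq i U) [:: (w, b)].
Proof. by rewrite phi_cons cats0 phiL_Wl; case: b; rewrite //= winv_wconj. Qed.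

Lemma phiL_Vl_conj v a : V2u E m u v -> AG (phiL u k (Vl v)) (wconj (nseq a U) [:: (v, false)]).
Proof. by move/(V2u_comm false)/wconj_comm => comm; apply: geq_sym. Qed.

(** * The kernel of [alpha] *)

Lemma alpha_cat x y : alpha u k (x ++ y) = (alpha u k x + alpha u k y)%R.
Proof. exact: big_cat. Qed.

Lemma alpha_winv x : alpha u k (winv x) = (- alpha u k x)%R.
Proof.
rewrite /alpha /winv big_rev big_map -sumrN; apply: eq_bigr => -[y b] _ /=.
by case: (y == u); case: b; rewrite ?opprK ?oppr0.
Qed.

Lemma alpha_wconj a s : alpha u k (wconj a s) = alpha u k s.
Proof. by rewrite /wconj !alpha_cat alpha_winv addrCA subrr addr0. Qed.

Lemma alpha_letter w b : w != u -> alpha u k [:: (w, b)] = 0%R.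
Proof. by move/negPf=> wu; rewrite /alpha big_seq1 /= wu. Qed.

Lemma alpha_nseqU n : alpha u k (nseq n U) = n%:R%R.
Proof. by elim: n => [|n IH]; rewrite /alpha ?big_nil // big_cons eqxx -/(alpha _ _ _) IH mulrS. Qed.

Lemma alpha_phiL x : wf_letter E m u k x -> alpha u k (phiL u k x) = 0%R.
Proof.
case: x => [|v|w i] wf_x.
- by rewrite /= alpha_nseqU pchar_Zp.
- exact/alpha_letter/V2u_neq.
- by case/andP: wf_x => /andP[wu _] _; rewrite phiL_Wl alpha_wconj alpha_letter.
Qed.

Lemma alpha_phi x : wf_word E m u k x -> alpha u k (phi u k x) = 0%R.
Proof.
elim: x => [|p x IH] /=; first by rewrite /alpha big_nil.
case/andP=> wf_p wf_x; rewrite phi_cons alpha_cat IH // addr0.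
by case: p.2; rewrite ?alpha_winv alpha_phiL ?oppr0.
Qed.

(** * The Reidemeister--Schreier rewriting process *)

Definition rs_letter (c : nat) (x : V) : plet V := if V2u E m u x then Vl x else Wl x c.

(* The state [c < k] is the coset [u^c] of the prefix read so far; a letter
   [Ubar] is emitted whenever the exponent of [u] crosses a multiple of [k]. *)
Definition rs_step (c : nat) (p : V * bool) : word (plet V) * nat :=
  if p.1 == u then
    if p.2 then (if c is c'.+1 then ([::], c') else ([:: (Ubar, true)], k.-1))
    else (if c.+1 < k then ([::], c.+1) else ([:: (Ubar, false)], 0))
  else ([:: (rs_letter c p.1, p.2)], c).
Arguments rs_step : simpl never.

Lemma rs_stepU c : rs_step c U = if c.+1 < k then ([::], c.+1) else ([:: (Ubar, false)], 0).
Proof. by rewrite /rs_step /= eqxx. Qed.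

Lemma rs_stepUi c :
  rs_step c (u, true) = if c is c'.+1 then ([::], c') else ([:: (Ubar, true)], k.-1).
Proof. by rewrite /rs_step /= eqxx. Qed.

Local Notation rs_rewrite := (run_out rs_step).
Local Notation rs_coset := (run_state rs_step).

Lemma last_coset c : c < k -> (c.+1 < k) = false -> c.+1 = k.
Proof. by move=> ck ck1; apply/eqP; rewrite eqn_leq ck leqNgt ck1. Qed.

Lemma rs_step_nonu c x b : x != u -> rs_step c (x, b) = ([:: (rs_letter c x, b)], c).
Proof. by move/negPf=> xu; rewrite /rs_step /= xu. Qed.

Lemma rs_step_lt c p : c < k -> (rs_step c p).2 < k.
Proof.
move=> ck; rewrite /rs_step; case: (p.1 == u) => //; case: p.2.
  by case: c ck => [|c] /= ck; [rewrite prednK ?k_gt0 | exact: ltnW].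
by case: ifP => // _; exact: k_gt0.
Qed.

Lemma rs_step_wf c p : c < k -> wf_word E m u k (rs_step c p).1.
Proof.
rewrite /rs_step /rs_letter => ck; case: eqP => [_|/eqP pu].
  by case: p.2; [case: c ck | case: ifP].
by case: ifP => Vp; rewrite /= ?Vp // /Wset pu Vp ck.
Qed.

Lemma rs_rewrite_wf c g : c < k -> wf_word E m u k (rs_rewrite c g).
Proof.
elim: g c => [|p g IH] c ck //=.
rewrite /wf_word all_cat; apply/andP; split; first exact: rs_step_wf.
by apply: IH; apply: rs_step_lt.
Qed.

Lemma rs_step_alpha c p : c < k ->
  ((rs_step c p).2%:R = c%:R + alpha u k [:: p] :> 'Z_k)%R.
Proof.
rewrite /rs_step /alpha big_seq1; case: eqP => _ ck /=; last by rewrite addr0.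
case: p.2.
  case: c ck => [|c] ck /=; last by rewrite mulrSr addrK.
  by apply/eqP; rewrite add0r -subr_eq0 opprK -mulrSr (prednK k_gt0) pchar_Zp.
case: ifP => ck1 /=; first by rewrite mulrS addrC.
by rewrite -mulrSr (last_coset ck ck1) pchar_Zp.
Qed.

Lemma rs_coset_alpha c g : c < k ->
  ((rs_coset c g)%:R = c%:R + alpha u k g :> 'Z_k)%R.
Proof.
elim: g c => [|p g IH] c ck /=; first by rewrite /alpha big_nil addr0.
by rewrite IH ?rs_step_lt // rs_step_alpha // -addrA -alpha_cat.
Qed.

Lemma rs_step_rep c p : c < k ->
  AG (nseq c U ++ [:: p]) (phi u k (rs_step c p).1 ++ nseq (rs_step c p).2 U).
Proof.
move=> ck; case: p => x b; rewrite /rs_step /=; case: eqP => [->|/eqP xu].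
  case: b => /=.
    case: c ck => [|c] ck.
      rewrite /= phi_cons cats0 /= winv_nseq -{1}(prednK k_gt0) /= -[nseq _ (u, true)](winv_nseq _ U).
      exact/geq_sym/(gcong_catl [:: (u, true)] (gcong_Vmul _ _)).
    rewrite -addn1 nseqD -catA /=.
    by move: (gcong_catl (nseq c U) (gcong_free (artin_rel E m) U)); rewrite cats0.
  case: ifP => ck1; first by rewrite -addn1 nseqD; exact: geq_refl.
  by rewrite /= phi_cons /= !cats0 -(last_coset ck ck1) -addn1 nseqD; exact: geq_refl.
rewrite /rs_letter; case: ifP => Vx.
  by rewrite phi_cons cats0; case: b; apply: gcong_comm_nseq; apply: V2u_comm.
by rewrite phi_Wl; apply/geq_sym/wconj_catr.
Qed.

Lemma kernel_generated g : alpha u k g = 0%R ->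
  exists x, wf_word E m u k x /\ AG g (phi u k x).
Proof.
move=> alpha_g; exists (rs_rewrite 0 g); split; first exact: rs_rewrite_wf k_gt0.
have coset0 : rs_coset 0 g = 0.
  have coset_lt : rs_coset 0 g < k := run_state_P rs_step_lt g k_gt0.
  by have := val_Zp_nat hk (rs_coset 0 g); rewrite rs_coset_alpha ?k_gt0 // alpha_g addr0 modn_small.
have := gcong_run_rep rs_step_lt rs_step_rep g k_gt0.
by rewrite coset0 /= cats0.
Qed.

(** * Soundness of the relations *)

Lemma phi_nseq_Ubar q b : phi u k (nseq q (Ubar, b)) = nseq (q * k) (u, b).
Proof.
elim: q => [|q IH] //; rewrite /= phi_cons IH mulSn nseqD.
by case: b {IH}; rewrite /= ?winv_nseq.
Qed.

Lemma phi_Wj w j : phi u k (Wj k w j) = wconj (nseq j U) [:: (w, false)].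
Proof.
rewrite /Wj !phi_cat !phi_nseq_Ubar phi_Wl /wconj !winv_nseq /=.
move: (divn_eq j k); set q := j %/ k; set s := j %% k => ->.
by rewrite nseqD [q * k + s]addnC nseqD -!catA.
Qed.

Lemma phi_Wj_iota w i l :
  AG (phi u k (flatten [seq Wj k w j | j <- iota i l]))
     (nseq i U ++ wpow [:: w; u] l ++ winv (nseq (i + l) U)).
Proof.
elim: l i => [|l IH] i; first by rewrite /= addn0; apply/geq_sym/gcong_mulV.
rewrite [iota _ _]/= [flatten _]/= phi_cat phi_Wj wpow2S.
apply: geq_trans (gcong_catl _ (IH i.+1)) _.
rewrite /wconj -[in nseq i.+1 U]addn1 nseqD -!catA addSnnS.
have := gcong_cancel (artin_rel E m) (nseq i U ++ [:: (w, false)]) (winv (nseq i U))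
   (U :: wpow [:: w; u] l ++ winv (nseq (i + l.+1) U)).
by rewrite winvK -!catA.
Qed.

Lemma phi_RB w i : E u w ->
  AG (phi u k (flatten [seq Wj k w j | j <- iota i (m u w)./2]))
     (phi u k (flatten [seq Wj k w j | j <- iota i.+1 (m u w)./2])).
Proof.
move=> Euw; set l := (m u w)./2.
apply: geq_trans (phi_Wj_iota w i l) _; apply: geq_sym.
apply: geq_trans (phi_Wj_iota w i.+1 l) _.
rewrite -[in nseq i.+1 U]addn1 nseqD -catA cat1s -cat_cons wpow_rcons -catA addSn !winv_nseq.
apply/gcong_catl/gcong_cat; first exact: artin_wpow.
exact: (gcong_catr _ (gcong_free _ U)).
Qed.

Lemma phi_wpow_artin x1 x2 (a1 a2 : V) (c : word V) : E a1 a2 ->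
  AG (phiL u k x1) (wconj c [:: (a1, false)]) ->
  AG (phiL u k x2) (wconj c [:: (a2, false)]) ->
  AG (phi u k (wpow [:: x1; x2] (m a1 a2)./2)) (phi u k (wpow [:: x2; x1] (m a1 a2)./2)).
Proof.
move=> Ea12 phi1 phi2.
apply: geq_trans (wsubst_wpow_conj _ phi1 phi2) _.
apply: geq_trans (gcong_wconj c (artin_wpow Ea12)) _.
exact/geq_sym/wsubst_wpow_conj.
Qed.

Lemma phi_pres_rel r s : pres_rel E m u k r s -> AG (phi u k r) (phi u k s).
Proof.
case=> [[v [Vv [-> ->]]] | [[v [v' [Vv Vv' Evv' -> ->]]] |
        [[v [w [i [Vv _ Evw _ [-> ->]]]]] | [[w [w' [i [_ _ Eww' _ [-> ->]]]]] |
        [w [i [_ Euw _ -> ->]]]]]]].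
- rewrite !phi_cons /= !cats0; apply: geq_sym.
  exact: gcong_comm_nseq (V2u_comm false Vv) k.
- by apply: (phi_wpow_artin (c := nseq 0 U)) => //; apply: phiL_Vl_conj.
- by apply: (phi_wpow_artin Evw (phiL_Vl_conj i Vv)); rewrite phiL_Wl; apply: geq_refl.
- by apply: (phi_wpow_artin (c := nseq i U)) => //; rewrite phiL_Wl; apply: geq_refl.
- exact: phi_RB.
Qed.

Lemma pres_rel_sound x y : PG x y -> AG (phi u k x) (phi u k y).
Proof. exact: (gcong_wsubst (f := phiL u k) phi_pres_rel). Qed.

(** * Completeness of the relations *)

Lemma rs_rewrite_nseqU c n : c + n < k ->
  rs_rewrite c (nseq n U) = [::] /\ rs_coset c (nseq n U) = c + n.
Proof.
elim: n c => [|n IH] c cnk /=; first by rewrite addn0.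
have c1k : c.+1 < k by apply: leq_ltn_trans cnk; rewrite addnS ltnS leq_addr.
rewrite rs_stepU c1k /=; rewrite addnS -addSn in cnk.
by have [-> ->] := IH _ cnk; rewrite addSnnS.
Qed.

Lemma rs_rewrite_nseqUi c n : n <= c ->
  rs_rewrite c (nseq n (u, true)) = [::] /\ rs_coset c (nseq n (u, true)) = c - n.
Proof.
elim: n c => [|n IH] [|c] nc //=.
by rewrite rs_stepUi subSS; apply: IH.
Qed.

Lemma rs_rewrite_letter p : wf_letter E m u k p.1 ->
  rs_rewrite 0 (phi u k [:: p]) = [:: p] /\ rs_coset 0 (phi u k [:: p]) = 0.
Proof.
case: p => -[|v|w i] b /= wf_p.
- have nseq_k x : nseq k x = nseq k.-1.+1 x by rewrite prednK ?k_gt0.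
  rewrite (phi_nseq_Ubar 1) mul1n nseq_k; case: b.
    rewrite /= rs_stepUi /=.
    by have [-> ->] := rs_rewrite_nseqUi (leqnn k.-1); rewrite subnn.
  rewrite -addn1 nseqD run_out_cat run_state_cat.
  have k1_lt : 0 + k.-1 < k by rewrite prednK ?k_gt0.
  have [-> ->] := rs_rewrite_nseqU k1_lt.
  by rewrite /= rs_stepU prednK ?k_gt0 // ltnn.
- rewrite phi_cons cats0 (_ : (if b then _ else _) = [:: (v, b)]); last by case: b.
  by rewrite /= rs_step_nonu ?V2u_neq // /rs_letter wf_p.
- case/andP: wf_p => /andP[wu Vw] ik.
  rewrite phi_Wl /wconj winv_nseq !run_out_cat !run_state_cat.
  have [-> ->] := rs_rewrite_nseqU (c := 0) (n := i) ik.
  rewrite /= rs_step_nonu // /rs_letter (negPf Vw) /=.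
  by have [-> ->] := rs_rewrite_nseqUi (leqnn i); rewrite subnn.
Qed.

Lemma rs_rewrite_phi x : wf_word E m u k x ->
  rs_rewrite 0 (phi u k x) = x /\ rs_coset 0 (phi u k x) = 0.
Proof.
elim: x => [|p x IH] //= /andP[wf_p wf_x].
rewrite -cat1s phi_cat run_out_cat run_state_cat.
by have [-> ->] := rs_rewrite_letter wf_p; have [-> ->] := IH wf_x.
Qed.

Lemma rs_rewrite_free c p : c < k ->
  rs_coset c [:: p; linv p] = c /\ PG (rs_rewrite c [:: p; linv p]) [::].
Proof.
move=> ck; case: p => x b; case: (eqVneq x u) => [->|xu].
  case: b => /=; rewrite rs_stepU rs_stepUi.
    case: c ck => [|c] ck /=; last by rewrite ck; split=> //; apply: geq_refl.
    rewrite prednK ?k_gt0 // ltnn; split=> //.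
    exact: (gcong_free _ (Ubar, true)).
  case: ifP => ck1 /=; first by split=> //; apply: geq_refl.
  split; first by rewrite -(last_coset ck ck1).
  exact: (gcong_free _ (Ubar, false)).
rewrite /= !rs_step_nonu //=; split=> //.
exact: gcong_free.
Qed.

Lemma rs_rewrite_wpow_nonu a b c n : a != u -> b != u ->
  rs_rewrite c (wpow [:: a; b] n) = wpow [:: rs_letter c a; rs_letter c b] n
  /\ rs_coset c (wpow [:: a; b] n) = c.
Proof.
move=> au bu; elim: n => [|n [IHout IHcoset]] //.
by rewrite !wpow2S /= !rs_step_nonu //= IHout IHcoset.
Qed.

Lemma rs_artin_nonu a b c : E a b -> a != u -> b != u -> c < k ->
  rs_coset c (wpow [:: a; b] (m a b)./2) = rs_coset c (wpow [:: b; a] (m a b)./2) /\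
  PG (rs_rewrite c (wpow [:: a; b] (m a b)./2)) (rs_rewrite c (wpow [:: b; a] (m a b)./2)).
Proof.
move=> Eab au bu ck.
have [-> ->] := rs_rewrite_wpow_nonu c (m a b)./2 au bu.
have [-> ->] := rs_rewrite_wpow_nonu c (m a b)./2 bu au.
split=> //; rewrite /rs_letter.
have Wa : ~~ V2u E m u a -> Wset E m u a by rewrite /Wset au.
have Wb : ~~ V2u E m u b -> Wset E m u b by rewrite /Wset bu.
case: ifP => Va; case: ifP => Vb; [| | apply: geq_sym; rewrite Hmsym |]; apply: gcong_rel.
- by right; left; exists a, b.
- by right; right; left; exists a, b, c; rewrite Wb ?Vb.
- by right; right; left; exists b, a, c; rewrite Wa ?Va // HEsym.
- by right; right; right; left; exists a, b, c; rewrite Wa ?Wb ?Va ?Vb.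
Qed.

Lemma rs_stepU_mod j : (rs_step (j %% k) U).2 = j.+1 %% k /\
  nseq (j %/ k) (Ubar, false) ++ (rs_step (j %% k) U).1 = nseq (j.+1 %/ k) (Ubar, false).
Proof.
have jk := ltn_pmod j k_gt0.
have j1E : j.+1 = j %/ k * k + (j %% k).+1 by rewrite {1}(divn_eq j k) addnS.
rewrite rs_stepU j1E; case: ifP => jk1 /=.
  by rewrite modnMDl (modn_small jk1) divnMDl ?k_gt0 // (divn_small jk1) addn0 cats0.
rewrite (last_coset jk jk1).
by rewrite -mulSnr modnMl mulnK ?k_gt0 // -addn1 nseqD.
Qed.

Lemma Wj_swap w j (g : word (plet V)) :
  PG (nseq (j %/ k) (Ubar, false) ++ (Wl w (j %% k), false) :: g)
     (Wj k w j ++ nseq (j %/ k) (Ubar, false) ++ g).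
Proof.
rewrite /Wj -!catA; apply: geq_sym.
have := gcong_cancel (pres_rel E m u k) (nseq (j %/ k) (Ubar, false) ++ [:: (Wl w (j %% k), false)])
   (nseq (j %/ k) (Ubar, true)) g.
by rewrite winv_nseq -!catA.
Qed.

Section RewriteBraid.
Variable w : V.
Hypotheses (wu : w != u) (Vw : ~~ V2u E m u w).

Lemma rs_step_W c b : rs_step c (w, b) = ([:: (Wl w c, b)], c).
Proof. by rewrite rs_step_nonu // /rs_letter (negPf Vw). Qed.

Lemma rs_rewrite_wpow_wu l j :
  rs_coset (j %% k) (wpow [:: w; u] l) = (j + l) %% k /\
  PG (nseq (j %/ k) (Ubar, false) ++ rs_rewrite (j %% k) (wpow [:: w; u] l))
     (flatten [seq Wj k w i | i <- iota j l] ++ nseq ((j + l) %/ k) (Ubar, false)).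
Proof.
elim: l j => [|l IH] j; first by rewrite addn0 /= cats0; split=> //; apply: geq_refl.
have [coset_j1 out_j1] := rs_stepU_mod j; have [coset_l out_l] := IH j.+1.
rewrite wpow2S /= rs_step_W /= coset_j1 coset_l addSnnS; split=> //.
apply: geq_trans (Wj_swap w j _) _.
by rewrite -catA; apply: gcong_catl; rewrite catA out_j1 -addSnnS.
Qed.

Lemma rs_rewrite_wpow_uw l j :
  rs_coset (j %% k) (wpow [:: u; w] l) = (j + l) %% k /\
  PG (nseq (j %/ k) (Ubar, false) ++ rs_rewrite (j %% k) (wpow [:: u; w] l))
     (flatten [seq Wj k w i | i <- iota j.+1 l] ++ nseq ((j + l) %/ k) (Ubar, false)).
Proof.
elim: l j => [|l IH] j; first by rewrite addn0 /= cats0; split=> //; apply: geq_refl.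
have [coset_j1 out_j1] := rs_stepU_mod j; have [coset_l out_l] := IH j.+1.
rewrite wpow2S /= coset_j1 rs_step_W /= coset_l addSnnS; split=> //.
rewrite catA out_j1; apply: geq_trans (Wj_swap w j.+1 _) _.
by rewrite -catA -addSnnS; apply: gcong_catl.
Qed.

End RewriteBraid.

Lemma rs_artin_u b c : E u b -> c < k ->
  rs_coset c (wpow [:: u; b] (m u b)./2) = rs_coset c (wpow [:: b; u] (m u b)./2) /\
  PG (rs_rewrite c (wpow [:: u; b] (m u b)./2)) (rs_rewrite c (wpow [:: b; u] (m u b)./2)).
Proof.
move=> Eub ck; have bu : b != u by rewrite eq_sym edge_neq.
case Vb: (V2u E m u b).
  have /andP[_ /eqP ->] := Vb.
  rewrite -[wpow [:: u; b] _]/[:: U; (b, false)] -[wpow [:: b; u] _]/[:: (b, false); U].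
  rewrite /= !(rs_step_nonu _ _ bu) /= rs_stepU /rs_letter Vb.
  case: ifP => _ /=; first by split=> //; apply: geq_refl.
  by split=> //; apply/geq_sym/gcong_rel; left; exists b.
have [coset_uw out_uw] := rs_rewrite_wpow_uw bu (negbT Vb) (m u b)./2 c.
have [coset_wu out_wu] := rs_rewrite_wpow_wu bu (negbT Vb) (m u b)./2 c.
rewrite modn_small // divn_small //= in coset_uw out_uw coset_wu out_wu.
rewrite coset_uw coset_wu; split=> //.
apply: geq_trans out_uw _; apply: geq_trans _ (geq_sym out_wu).
apply/gcong_catr/geq_sym/gcong_rel.
by right; right; right; right; exists b, c; rewrite /Wset bu Vb.
Qed.

Lemma rs_artin_rel c r s : c < k -> artin_rel E m r s ->
  rs_coset c r = rs_coset c s /\ PG (rs_rewrite c r) (rs_rewrite c s).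
Proof.
move=> ck /artin_relP[a [b [Eab -> ->]]].
have [a_u|au] := eqVneq a u; first by subst a; exact: rs_artin_u.
have [b_u|bu] := eqVneq b u; last exact: rs_artin_nonu.
subst b; rewrite HEsym in Eab; have [coset_eq out_eq] := rs_artin_u Eab ck.
by rewrite Hmsym; split; [rewrite coset_eq | apply: geq_sym].
Qed.

Lemma pres_rel_complete x y : wf_word E m u k x -> wf_word E m u k y ->
  AG (phi u k x) (phi u k y) -> PG x y.
Proof.
move=> wf_x wf_y xy.
have [_] := gcong_run rs_step_lt rs_rewrite_free rs_artin_rel xy k_gt0.
by have [-> _] := rs_rewrite_phi wf_x; have [-> _] := rs_rewrite_phi wf_y.
Qed.

End CoCyclicSubgroup.

Theorem theorem2p1 (V : finType) (E : rel V) (m : V -> V -> nat) (u : V) (k : nat)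
  (HEsym : symmetric E) (HEirr : irreflexive E)
  (Hmsym : forall a b, m a b = m b a)
  (Hmeven : forall a b, E a b -> 2 <= m a b /\ ~~ odd (m a b))
  (hk : 2 <= k) :
  (forall x : word (plet V), wf_word E m u k x -> alpha u k (phi u k x) = 0%R)
  /\
  (forall g : word V, alpha u k g = 0%R ->
     exists x : word (plet V), wf_word E m u k x /\ gcong (artin_rel E m) g (phi u k x))
  /\
  (forall x y : word (plet V), wf_word E m u k x -> wf_word E m u k y ->
     (gcong (artin_rel E m) (phi u k x) (phi u k y) <-> gcong (pres_rel E m u k) x y)).
Proof.
split; first exact: alpha_phi.
split; first exact: kernel_generated.
move=> x y wf_x wf_y; split; first exact: pres_rel_complete.
exact: pres_rel_sound.
Qed.
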